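(* Let $n\ge 1$ and let $G$ be the graph on the $3n+1$ vertices $c, v_{i,1}, v_{i,2}, v_{i,3}$ ($1\le i\le n$) in which two distinct vertices are adjacent except exactly for the pairs $\{c,v_{i,1}\}$, $\{v_{i,1},v_{i,2}\}$, $\{v_{i,2},v_{i,3}\}$ for $1\le i\le n$ (i.e. $G$ is the complement of a star with $n$ branches of $3$ edges each). Then $\tau(G)=3n-1$, while a minimum connecting transition set of $G$ has size exactly $2n$.
   Context: All graphs are finite, simple and undirected. $G[X]$ denotes the subgraph induced by $X\subseteq V(G)$. The complement $\bar G$ has vertex set $V(G)$ and an edge $xy$ ($x\ne y$) iff $xy\notin E(G)$. A co-connected component of $G$ is (the vertex set of) a connected component of $\bar G$. For a graph $G$, $\tau(G)=\sum_{C}(|C|-2)$ if $G[C]$ connected, $(|C|-1)$ otherwise, the sum over co-connected components $C$ with $|C|\ge 2$. A transition of a graph $G$ is an unordered pair $\{ab,bc\}$ of two distinct edges of $G$ sharing the vertex $b$ (so $a\neq c$); it is written $abc$. A walk in $G$ is a sequence $(v_1,\dots,v_k)$ of vertices with $v_iv_{i+1}\in E(G)$ for all $i\le k-1$. For a set $T$ of transitions of $G$, a walk $(v_1,\dots,v_k)$ is $T$-compatible if for every $i\in[1,k-2]$, either $v_i=v_{i+2}$ or $v_iv_{i+1}v_{i+2}\in T$. $T$ is a connecting transition set of $G$ if for all vertices $u,v$ there is a $T$-compatible walk from $u$ to $v$; a minimum one has minimum cardinality. *)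

From mathcomp Require Import all_boot.
Set Implicit Arguments. Unset Strict Implicit. Unset Printing Implicit Defensive.

Section Graphs.
Variable T : finType.
(* a simple graph is a symmetric irreflexive relation e on T *)
Variable e : rel T.

Definition complg : rel T := fun x y => (x != y) && ~~ e x y.

Definition cocomp (x : T) : {set T} := [set y | connect complg x y].
Definition cocomps : {set {set T}} := [set cocomp x | x in T].

Definition induced (C : {set T}) : rel T :=
  fun x y => [&& e x y, x \in C & y \in C].
Definition induced_connected (C : {set T}) : Prop :=
  forall x y, x \in C -> y \in C -> connect (induced C) x y.

Definition tau_term (C : {set T}) : nat :=
  if [forall x in C, forall y in C, connect (induced C) x y]
  then #|C| - 2 else #|C| - 1.

Definition tau : nat := \sum_(C in cocomps | 2 <= #|C|) tau_term C.

(* A transition {ab, bc} (a <> c) is encoded by its middle vertex b together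
   with the unordered pair {a, c}; this encoding is bijective for simple graphs. *)
Definition is_transition (t : T * {set T}) : bool :=
  (#|t.2| == 2) && [forall x in t.2, e t.1 x].

Definition transition_set (Tr : {set T * {set T}}) : Prop :=
  forall t, t \in Tr -> is_transition t.

Definition compatible (Tr : {set T * {set T}}) (w : seq T) : Prop :=
  forall i x0, i.+2 < size w ->
    nth x0 w i = nth x0 w i.+2 \/
    (nth x0 w i.+1, [set nth x0 w i; nth x0 w i.+2]) \in Tr.

Definition connecting (Tr : {set T * {set T}}) : Prop :=
  forall u v : T, exists p : seq T,
    [/\ path e u p, last u p = v & compatible Tr (u :: p)].

Definition min_connecting_size (m : nat) : Prop :=
  (exists Tr, [/\ transition_set Tr, connecting Tr & #|Tr| = m]) /\
  (forall Tr, transition_set Tr -> connecting Tr -> m <= #|Tr|).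

End Graphs.

(* Vertices: None = c, Some (i, j) = v_{i+1, j+1}. *)
Definition star_vertex (n : nat) : finType := option ('I_n * 'I_3).

Definition star_nonedge (n : nat) (x y : star_vertex n) : bool :=
  match x, y with
  | None, Some (_, j) => (j : nat) == 0
  | Some (_, j), None => (j : nat) == 0
  | Some (i, j), Some (i', j') =>
      (i == i') && (((j : nat).+1 == j') || ((j' : nat).+1 == j))
  | None, None => false
  end.

Definition costar (n : nat) : rel (star_vertex n) :=
  fun x y => (x != y) && ~~ star_nonedge x y.

From mathcomp Require Import all_boot zify.
Set Implicit Arguments. Unset Strict Implicit. Unset Printing Implicit Defensive.

(* Lower bound: process the transitions abc of a connecting set Tr one by one,
   starting from the edges each in its own class and merging the classes of ab
   and bc.  The excess, the sum over classes of (number of covered vertices - 2),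
   grows by at most one per merge, since the two classes share b; so it is at
   most #|Tr|.  A compatible walk never leaves a class, hence any two vertices
   are covered by a common class, and a covered vertex set W has no isolated
   vertex in G.  The non-edges of G are the pairs {v, parent v} of the star
   rooted at c; in such a W at most (3/2)(#|W| - 2) vertices v <> c have their
   parent in W (at most #|W| - 1 by acyclicity, at most #|W| - 2 if #|W| <= 3).
   Every v <> c has its parent in the class covering both, so 3n <= (3/2) #|Tr|.
   The bound 2n is attained by the transitions v_{i,1} v_{i,3} c and
   v_{i,3} c v_{i,2}, and tau(G) = 3n - 1 because both G and its complement are
   connected. *)

Lemma card_bigcup_leq (I T : finType) (F : I -> {set T}) :
  #|\bigcup_i F i| <= \sum_i #|F i|.
Proof.
elim/big_ind2: _ => [|a A b B leA leB|//]; first by rewrite cards0.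
exact: leq_trans (leq_card_setU A B).1 (leq_add leA leB).
Qed.

Section EdgeClasses.
Variables (T : finType) (e : rel T).

Definition no_isolated (W : {set T}) : Prop :=
  forall x, x \in W -> exists2 y, y \in W & e x y.

Lemma nonadjacent_pair_unique (W : {set T}) x y x' y' :
  symmetric e -> irreflexive e -> no_isolated W -> #|W| <= 3 ->
  x \in W -> y \in W -> ~~ e x y -> x != y ->
  x' \in W -> y' \in W -> ~~ e x' y' -> x' != y' ->
  [set x'; y'] = [set x; y].
Proof.
(* The neighbour z of x in W is forced to be a neighbour of y as well, so
   {x, y} is the only non-edge inside W = {x, y, z}. *)
move=> esym eirr nbr cW xW yW nxy xy x'W y'W nxy' xy'.
have [z zW exz] := nbr x xW.
have zx : z != x by apply: contraTneq exz => ->; rewrite eirr.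
have zy : z != y by apply: contraTneq exz => ->.
have Wxyz : W = x |: [set y; z].
  have card3 : #|x |: [set y; z]| = 3.
    by rewrite cardsU1 cards2 !inE (negbTE xy) eq_sym (negbTE zx) eq_sym zy.
  apply/eqP; rewrite eq_sym eqEcard card3 cW andbT.
  by apply/subsetP => v; rewrite !inE => /or3P[] /eqP->.
have eyz : e y z.
  have [z' + eyz'] := nbr y yW.
  rewrite Wxyz !inE => /or3P[] /eqP ez'; move: eyz'; rewrite ez'.
  - by rewrite esym (negbTE nxy).
  - by rewrite eirr.
  - by [].
move: x'W y'W xy' nxy'; rewrite Wxyz !inE.
by case/or3P=> /eqP-> /or3P[] /eqP->; rewrite ?eqxx ?exz ?eyz ?(esym z) ?exz ?eyz // setUC.
Qed.

Definition edge_set (x : {set T}) : bool :=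
  [exists a, exists b, (x == [set a; b]) && e a b].

Lemma edge_set2 a b : e a b -> edge_set [set a; b].
Proof. by move=> eab; apply/existsP; exists a; apply/existsP; exists b; rewrite eqxx. Qed.

Definition edge_class (lab : {set T} -> {set T}) (l : {set T}) : {set T} :=
  \bigcup_(x | edge_set x && (lab x == l)) x.

Definition excess (lab : {set T} -> {set T}) : nat :=
  \sum_(l : {set T}) (#|edge_class lab l| - 2).

Lemma edge_class_sub lab x : edge_set x -> x \subset edge_class lab (lab x).
Proof. by move=> Ex; apply: (bigcup_sup x); rewrite Ex eqxx. Qed.

Lemma edge_class_no_isolated lab l :
  symmetric e -> no_isolated (edge_class lab l).
Proof.
move=> esym x /bigcupP[_ /andP[/existsP[a /existsP[b /andP[/eqP-> eab]]] /eqP<-]].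
have sub := edge_class_sub lab (edge_set2 eab).
rewrite !inE => /orP[] /eqP->.
- by exists b => //; apply: (subsetP sub); rewrite !inE eqxx orbT.
- by exists a; [apply: (subsetP sub); rewrite !inE eqxx | rewrite esym].
Qed.

Lemma excess_id : excess id = 0.
Proof.
apply: big1 => l _; apply/eqP; rewrite subn_eq0.
case El: (edge_set l).
  move: El => /existsP[a /existsP[b /andP[/eqP El _]]].
  have sub : edge_class id l \subset l by apply/bigcupsP => x /andP[_ /eqP->].
  by apply: leq_trans (subset_leq_card sub) _; rewrite El cards2 ltnS leq_b1.
rewrite /edge_class big_pred0 ?cards0 // => x.
by apply/andP=> -[Ex /eqP xl]; rewrite -xl Ex in El.
Qed.

Definition merge (lab : {set T} -> {set T}) (l1 l2 : {set T}) x : {set T} :=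
  if lab x == l1 then l2 else lab x.

Lemma merge_id lab l : merge lab l l =1 lab.
Proof. by move=> x; rewrite /merge; case: eqP. Qed.

Lemma edge_class_merge lab l1 l2 : l1 != l2 -> forall l,
  edge_class (merge lab l1 l2) l \subset
  (if l == l1 then set0
   else if l == l2 then edge_class lab l1 :|: edge_class lab l2
   else edge_class lab l).
Proof.
move=> l12 l; apply/bigcupsP => x /andP[Ex /eqP<-]; rewrite /merge.
have [xl1|xl1] := eqVneq (lab x) l1.
  rewrite eq_sym (negbTE l12) eqxx -xl1.
  by apply: subset_trans (edge_class_sub lab Ex) (subsetUl _ _).
rewrite (negbTE xl1); case: eqP => [xl2|_]; last exact: edge_class_sub.
by rewrite -xl2; apply: subset_trans (edge_class_sub lab Ex) (subsetUr _ _).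
Qed.

Lemma excess_merge lab x y b : edge_set x -> edge_set y -> b \in x -> b \in y ->
  excess (merge lab (lab x) (lab y)) <= (excess lab).+1.
Proof.
move=> Ex Ey bx by_; set l1 := lab x; set l2 := lab y; set C := edge_class lab.
have [<-|l12] := eqVneq l1 l2.
  rewrite leqW // leq_eqVlt; apply/orP; left; apply/eqP; apply: eq_bigr => l _.
  by rewrite /edge_class; under eq_bigl => z do rewrite merge_id.
have l21 : l2 != l1 by rewrite eq_sym.
have sub := edge_class_merge lab l12.
rewrite /excess (bigD1 l1) // (bigD1 l2) //= [X in _ <= X.+1](bigD1 l1) //.
rewrite [X in _ <= (_ + X).+1](bigD1 l2) //= -/C.
have rest : \sum_(l | (l != l1) && (l != l2))
    (#|edge_class (merge lab l1 l2) l| - 2) <= \sum_(l | (l != l1) && (l != l2)) (#|C l| - 2).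
  apply: leq_sum => l /andP[/negbTE ll1 /negbTE ll2].
  by apply/leq_sub2r/subset_leq_card; have := sub l; rewrite ll1 ll2.
have empty1 : #|edge_class (merge lab l1 l2) l1| = 0.
  by apply/eqP; rewrite cards_eq0 -subset0; have := sub l1; rewrite eqxx.
have union2 : #|edge_class (merge lab l1 l2) l2| <= #|C l1 :|: C l2|.
  by apply: subset_leq_card; have := sub l2; rewrite (negbTE l21) eqxx.
have bC1 : b \in C l1 by apply: (subsetP (edge_class_sub lab Ex)).
have bC2 : b \in C l2 by apply: (subsetP (edge_class_sub lab Ey)).
have meet : 0 < #|C l1 :&: C l2| by apply/card_gt0P; exists b; rewrite inE bC1.
have pos1 : 0 < #|C l1| by apply/card_gt0P; exists b.
have pos2 : 0 < #|C l2| by apply/card_gt0P; exists b.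
rewrite empty1 sub0n add0n addnA -addSn; apply: leq_add rest.
by move: union2 meet pos1 pos2 (cardsUI (C l1) (C l2)); lia.
Qed.

Definition trans_end1 (t : T * {set T}) : T := odflt t.1 [pick x in t.2].
Definition trans_end2 (t : T * {set T}) : T :=
  odflt t.1 [pick x in t.2 :\ trans_end1 t].

Lemma trans_endsE (t : T * {set T}) : #|t.2| = 2 -> t.2 = [set trans_end1 t; trans_end2 t].
Proof.
move=> c2.
have end1 : trans_end1 t \in t.2.
  by rewrite /trans_end1; case: pickP => // none; move: c2; rewrite (eq_card0 none).
have end2 : trans_end2 t \in t.2 :\ trans_end1 t.
  rewrite /trans_end2; case: pickP => // none.
  by move: c2; rewrite (cardsD1 (trans_end1 t)) end1 (eq_card0 none).
move: end2; rewrite !inE => /andP[ne12 end2].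
apply/eqP; rewrite eq_sym eqEcard cards2 c2 eq_sym ne12 andbT.
by apply/subsetP => x /set2P[]->.
Qed.

Definition step_label (lab : {set T} -> {set T}) (t : T * {set T}) :=
  merge lab (lab [set t.1; trans_end1 t]) (lab [set t.1; trans_end2 t]).

Definition transition_label (s : seq (T * {set T})) : {set T} -> {set T} :=
  foldr (fun t lab => step_label lab t) id s.

Definition respects (Tr : {set T * {set T}}) (lab : {set T} -> {set T}) :=
  forall t, t \in Tr -> forall x y, x \in t.2 -> y \in t.2 ->
    lab [set t.1; x] = lab [set t.1; y].

Lemma excess_transition_label s : all (is_transition e) s ->
  excess (transition_label s) <= size s.
Proof.
elim: s => [|t s IHs] /=; first by rewrite excess_id.
case/andP=> /andP[/eqP/trans_endsE ends /forall_inP adj] /IHs le_s.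
have adj_end x : x \in [set trans_end1 t; trans_end2 t] -> e t.1 x.
  by rewrite -ends; apply: adj.
apply: leq_trans (_ : _ <= (excess (transition_label s)).+1) _; last by [].
exact: excess_merge (edge_set2 (adj_end _ (set21 _ _)))
  (edge_set2 (adj_end _ (set22 _ _))) (set21 t.1 _) (set21 t.1 _).
Qed.

Lemma transition_label_respects s : all (is_transition e) s ->
  respects [set t in s] (transition_label s).
Proof.
elim: s => [|t s IHs] /=; first by move=> _ t; rewrite inE.
case/andP=> /andP[/eqP/trans_endsE ends _] /IHs resp t'.
rewrite inE in_cons => /orP[/eqP->|t's] x y; last first.
  by move=> xt yt; rewrite /step_label /merge (resp t' _ x y) ?inE.
suff end2 z : z \in t.2 -> step_label (transition_label s) t [set t.1; z] =
    transition_label s [set t.1; trans_end2 t].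
  by move=> /end2-> /end2->.
by rewrite ends /step_label /merge => /set2P[]->; [rewrite eqxx | case: ifP].
Qed.

Lemma compatible_walk_label Tr lab : respects Tr lab ->
  forall p u w, path e u (w :: p) -> compatible Tr (u :: w :: p) ->
  exists2 y, e y (last w p) & lab [set u; w] = lab [set y; last w p].
Proof.
move=> resp; elim=> [|w' p IHp] u w /=; first by case/andP=> euw _ _; exists u.
case/andP=> _ walk comp.
have [y ey lab_eq] := IHp w w' walk (fun i x0 => comp i.+1 x0).
exists y => //; rewrite -lab_eq.
have [/= ->|/= tr] := comp 0 u isT; first by rewrite setUC.
by rewrite setUC (resp _ tr u w') ?set21 ?set22.
Qed.

Lemma connecting_edge_classes Tr : transition_set e Tr -> connecting e Tr ->
  exists lab, excess lab <= #|Tr| /\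
    forall u v, u != v -> exists l, (u \in edge_class lab l) && (v \in edge_class lab l).
Proof.
move=> trans conn; exists (transition_label (enum Tr)).
have all_trans : all (is_transition e) (enum Tr).
  by apply/allP => t; rewrite mem_enum; apply: trans.
split; first by rewrite cardE; apply: excess_transition_label.
have := transition_label_respects all_trans; rewrite set_enum => resp.
move=> u v; have [[|w p] [walk <- comp]] := conn u v => [|_]; first by rewrite eqxx.
have [y ey lab_eq] := compatible_walk_label resp walk comp.
move: walk => /= /andP[euw _].
exists (transition_label (enum Tr) [set u; w]); apply/andP; split.
  by apply: (subsetP (edge_class_sub _ (edge_set2 euw))); rewrite set21.
by rewrite lab_eq; apply: (subsetP (edge_class_sub _ (edge_set2 ey))); rewrite set22.
Qed.

End EdgeClasses.

Section CoStar.
Variable n : nat.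
Local Notation V := (star_vertex n).
Local Notation G := (@costar n).

Definition o0 : 'I_3 := @Ordinal 3 0 isT.
Definition o1 : 'I_3 := @Ordinal 3 1 isT.
Definition o2 : 'I_3 := @Ordinal 3 2 isT.

Lemma ord3P (j : 'I_3) : [\/ j = o0, j = o1 | j = o2].
Proof.
case: j => -[|[|[|k]]] // jlt; [apply: Or31 | apply: Or32 | apply: Or33];
  exact: val_inj.
Qed.

Definition parent (v : V) : V :=
  if v is Some (i, j) then
    if j == o0 then None else if j == o1 then Some (i, o0) else Some (i, o1)
  else None.

Definition depth (v : V) : nat := if v is Some (_, j) then j.+1 else 0.

Lemma depth_parent v : v != None -> depth (parent v) < depth v.
Proof. by case: v => [[i [[|[|[|k]]] Hk]]|]. Qed.

Lemma parent_neq v : v != None -> v != parent v.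
Proof. by move=> vN; apply: contraTneq (depth_parent vN) => <-; rewrite ltnn. Qed.

Lemma star_nonedgeE (x y : V) : star_nonedge x y =
  (y != None) && (x == parent y) || (x != None) && (y == parent x).
Proof.
case: x => [[i [[|[|[|k]]] Hk]]|]; case: y => [[i' [[|[|[|k']]] Hk']]|] //=;
  by rewrite ?(inj_eq Some_inj) ?xpair_eqE /= ?andbT ?andbF ?orbF // ?(eq_sym i').
Qed.

Lemma costar_irr : irreflexive G.
Proof. by move=> x; rewrite /costar eqxx. Qed.

Lemma costar_sym : symmetric G.
Proof. by move=> x y; rewrite /costar !star_nonedgeE eq_sym orbC. Qed.

Lemma costar_parent v : v != None -> ~~ G v (parent v).
Proof. by move=> vN; rewrite /costar star_nonedgeE vN eqxx orbT andbF. Qed.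

Definition with_parent (W : {set V}) : {set V} :=
  [set v in W | (v != None) && (parent v \in W)].

Lemma parent_pair_inj v w : v != None -> w != None ->
  [set w; parent w] = [set v; parent v] -> w = v.
Proof.
move=> vN wN vw_eq.
have: w \in [set v; parent v] by rewrite -vw_eq set21.
have: v \in [set w; parent w] by rewrite vw_eq set21.
rewrite !inE => /orP[/eqP//|/eqP vw] /orP[/eqP//|/eqP wv].
by move: (depth_parent vN) (depth_parent wN); rewrite -wv -vw; lia.
Qed.

Lemma card_with_parent_lt W : W != set0 -> #|with_parent W| < #|W|.
Proof.
(* A vertex of W of minimal depth has no parent in W. *)
case/set0Pn => v0 v0W; have [m mW mmin] := arg_minnP depth v0W.
apply/proper_card/properP; split; first by apply/subsetP => x; rewrite inE => /andP[].
exists m => //; rewrite inE; apply/negP => /and3P[_ mN pmW].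
by have := mmin _ pmW; rewrite leqNgt depth_parent.
Qed.

Lemma card_with_parent_small W : no_isolated G W -> #|W| <= 3 ->
  #|with_parent W| <= #|W| - 2.
Proof.
move=> nbr cW.
have [->|[u]] := set_0Vmem (with_parent W); first by rewrite cards0.
rewrite inE => /and3P[uW uN puW].
have u_par := parent_neq uN.
have only_u : with_parent W \subset [set u].
  apply/subsetP => w; rewrite !inE => /and3P[wW wN pwW].
  apply/eqP; apply: (parent_pair_inj uN wN).
  exact: nonadjacent_pair_unique costar_sym costar_irr nbr cW uW puW
    (costar_parent uN) u_par wW pwW (costar_parent wN) (parent_neq wN).
have [y yW uy] := nbr u uW.
have W3 : 2 < #|W|.
  apply/card_gt2P; exists u, (parent u), y; do 2 split => //.
    by apply: contraTneq uy => <-; rewrite costar_parent.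
  by apply: contraTneq uy => ->; rewrite costar_irr.
by have := subset_leq_card only_u; rewrite cards1; lia.
Qed.

Lemma card_with_parent_bound W : no_isolated G W ->
  2 * #|with_parent W| <= 3 * (#|W| - 2).
Proof.
move=> nbr; have [small|large] := leqP #|W| 3.
  by have := card_with_parent_small nbr small; lia.
have W0 : W != set0 by rewrite -card_gt0; lia.
by have := card_with_parent_lt W0; lia.
Qed.

Lemma card_star_vertex : #|V| = (3 * n).+1.
Proof. by rewrite card_option card_prod !card_ord mulnC. Qed.

Lemma costar_connecting_card Tr : transition_set G Tr -> connecting G Tr ->
  2 * n <= #|Tr|.
Proof.
move=> trans conn.
have [lab [exc same_class]] := connecting_edge_classes trans conn.
pose W l := edge_class G lab l.
have cover : [set~ None] \subset \bigcup_l with_parent (W l).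
  apply/subsetP => v; rewrite !inE => vN.
  have [l /andP[vW pvW]] := same_class v (parent v) (parent_neq vN).
  by apply/bigcupP; exists l => //; rewrite inE vW vN pvW.
have lb : 3 * n <= \sum_l #|with_parent (W l)|.
  have <- : #|[set~ (None : V)]| = 3 * n by rewrite cardsC1 card_star_vertex.
  exact: leq_trans (subset_leq_card cover) (card_bigcup_leq _).
have ub : 2 * \sum_l #|with_parent (W l)| <= 3 * #|Tr|.
  apply: leq_trans (leq_mul (leqnn 3) exc); rewrite !big_distrr.
  by apply: leq_sum => l _; apply/card_with_parent_bound/edge_class_no_isolated/costar_sym.
lia.
Qed.

Definition costar_transitions : {set V * {set V}} :=
  [set (Some (i, o2), [set Some (i, o0); None]) | i : 'I_n] :|:
  [set (None, [set Some (i, o2); Some (i, o1)]) | i : 'I_n].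

Lemma card_costar_transitions : #|costar_transitions| = 2 * n.
Proof.
rewrite cardsU !card_imset ?card_ord.
- suff -> : [set (Some (i, o2), [set Some (i, o0); None]) | i : 'I_n] :&:
      [set (None, [set Some (i, o2); Some (i, o1)]) | i : 'I_n] = set0.
    by rewrite cards0 subn0 addnn mul2n.
  by apply/setP => t; rewrite !inE; apply/andP => -[/imsetP[i _ ->] /imsetP[j _]].
- move=> i j [] ij_eq.
  have : Some (i, o2) \in [set Some (j, o2); Some (j, o1)] by rewrite -ij_eq set21.
  by rewrite !inE !(inj_eq Some_inj) !xpair_eqE eqxx andbT => /orP[|/andP[]] /eqP.
- by move=> i j [->].
Qed.

Lemma costar_transitions_trans : transition_set G costar_transitions.
Proof.
move=> t; rewrite inE => /orP[] /imsetP[i _ ->];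
  rewrite /is_transition cards2 ?(inj_eq Some_inj) ?xpair_eqE ?eqxx /=;
  apply/forall_inP => x /set2P[]->;
  by rewrite /costar /= ?(inj_eq Some_inj) ?xpair_eqE ?eqxx ?andbF.
Qed.

Lemma mem_costar_transitions i :
  [/\ (Some (i, o2), [set Some (i, o0); None]) \in costar_transitions,
      (Some (i, o2), [set None; Some (i, o0)]) \in costar_transitions,
      (None, [set Some (i, o2); Some (i, o1)]) \in costar_transitions &
      (None, [set Some (i, o1); Some (i, o2)]) \in costar_transitions].
Proof.
have leaf : (Some (i, o2), [set Some (i, o0); None]) \in costar_transitions.
  by rewrite inE; apply/orP; left; apply/imsetP; exists i.
have centre : (None, [set Some (i, o2); Some (i, o1)]) \in costar_transitions.
  by rewrite inE; apply/orP; right; apply/imsetP; exists i.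
by split; rewrite // setUC.
Qed.

Ltac compatible_walk i :=
  have [? ? ? ?] := mem_costar_transitions i;
  split; [by rewrite /= /costar /= ?(inj_eq Some_inj) ?xpair_eqE ?eqxx ?andbF | by [] |
          by move=> [|[|k]] x0 //= _; right].

Lemma costar_transitions_connecting : connecting G costar_transitions.
Proof.
move=> u v.
have [<-|uv] := eqVneq u v; first by exists [::]; split => // i x0.
have [adj|] := boolP (G u v); first by exists [:: v]; split; rewrite //= adj.
rewrite /costar uv negbK.
case: u uv => [[i j]|]; case: v => [[i' j']|] //= _.
- case/andP=> /eqP<-.
  case: (ord3P j) => ->; case: (ord3P j') => -> //= _.
  + by exists [:: Some (i, o2); None; Some (i, o1)]; compatible_walk i.
  + by exists [:: None; Some (i, o2); Some (i, o0)]; compatible_walk i.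
  + by exists [:: None; Some (i, o2)]; compatible_walk i.
  + by exists [:: None; Some (i, o1)]; compatible_walk i.
- case: (ord3P j) => -> // _.
  by exists [:: Some (i, o2); None]; compatible_walk i.
- case: (ord3P j') => -> // _.
  by exists [:: Some (i', o2); Some (i', o0)]; compatible_walk i'.
Qed.

Lemma complg_connect_root (x : V) : connect (complg G) x None.
Proof.
have [k] := ubnP (depth x); elim: k x => // k IHk x /ltnSE dx.
have [->|xN] := eqVneq x None; first exact: connect0.
apply: connect_trans (IHk _ (leq_trans (depth_parent xN) dx)).
by apply: connect1; rewrite /complg parent_neq // costar_parent.
Qed.

Lemma cocomps_costar : cocomps G = [set setT].
Proof.
have complg_sym : symmetric (complg G).
  by move=> x y; rewrite /complg eq_sym costar_sym.
have cocompT x : cocomp G x = setT.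
  apply/setP => y; rewrite !inE; apply: connect_trans (complg_connect_root x) _.
  by rewrite (sym_connect_sym complg_sym) complg_connect_root.
apply/setP => C; rewrite !inE; apply/imsetP/eqP => [[x _ ->]|->]; first exact: cocompT.
by exists None; rewrite ?cocompT.
Qed.

Lemma costar_connect_root (x : V) : connect G x None.
Proof.
case: x => [[i j]|]; last exact: connect0.
have adj_root k : k != o0 -> G (Some (i, k)) None.
  by rewrite /costar /=; case: (ord3P k) => ->.
case: (ord3P j) => ->; try exact/connect1/adj_root.
apply: connect_trans (connect1 (adj_root o2 isT)).
by apply: connect1; rewrite /costar /= ?(inj_eq Some_inj) ?xpair_eqE ?eqxx.
Qed.

Lemma tau_costar : 0 < n -> tau G = 3 * n - 1.
Proof.
move=> n_gt0; rewrite /tau cocomps_costar (big_pred1 setT) => [|C]; last first.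
  by rewrite !inE; case: eqP => // ->; rewrite cardsT card_star_vertex ltnS muln_gt0 n_gt0.
have induced_setT : induced G setT =2 G by move=> x y; rewrite /induced !inE !andbT.
rewrite /tau_term cardsT card_star_vertex.
case: forall_inP => [_|[]]; first lia.
move=> x _; apply/forall_inP => y _; rewrite (eq_connect induced_setT).
apply: connect_trans (costar_connect_root x) _.
by rewrite (sym_connect_sym costar_sym) costar_connect_root.
Qed.

End CoStar.

Theorem mainTheorem9 (n : nat) (hn : 1 <= n) :
  tau (@costar n) = 3 * n - 1 /\ min_connecting_size (@costar n) (2 * n).
Proof.
split; first exact: tau_costar.
split; last by move=> Tr; apply: costar_connecting_card.
exists (costar_transitions n); split.
- exact: costar_transitions_trans.
- exact: costar_transitions_connecting.
- exact: card_costar_transitions.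
Qed.
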